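(* Let $\mathcal H$ be the $5$-uniform hypergraph defined below and let $e,f$ be two edges of $\mathcal H$. Then every monomorphism $\phi : V(\mathcal{H}_{ef}) \to V(\mathcal{H})$ is the identity.
   Context: $\mathcal{H}$ has vertex set $\{z, v_1,\dots,v_9\}$ and edges $r=\{z,v_1,v_3,v_5,v_8\}$, $g=\{z,v_2,v_4,v_7,v_9\}$, $a=\{v_1,v_4,v_6,v_8,v_9\}$, $b=\{v_9,v_1,v_2,v_3,v_4\}$, and $e_i=\{v_i,v_{i+1},v_{i+2},v_{i+3},v_{i+4}\}$ for $i=1,\dots,5$. $\mathcal{H}_{ef}$ is the hypergraph with edge set $E(\mathcal H)\setminus\{e,f\}$, and $V(\mathcal H_{ef})$ is the union of its edges. A monomorphism $\phi: V(\mathcal{H}_{ef})\to V(\mathcal{H})$ is an injective map such that $\{\phi(y): y\in x\}$ is an edge of $\mathcal H$ for every edge $x$ of $\mathcal H_{ef}$; ''identity'' means $\phi(y)=y$ for all $y\in V(\mathcal H_{ef})$. *)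

From mathcomp Require Import all_boot.
Set Implicit Arguments. Unset Strict Implicit. Unset Printing Implicit Defensive.

Definition vtx := 'I_10.
Definition z : vtx := inord 0.
Definition v (i : nat) : vtx := inord i.

Definition edge_r : {set vtx} := [set z; v 1; v 3; v 5; v 8].
Definition edge_g : {set vtx} := [set z; v 2; v 4; v 7; v 9].
Definition edge_a : {set vtx} := [set v 1; v 4; v 6; v 8; v 9].
Definition edge_b : {set vtx} := [set v 9; v 1; v 2; v 3; v 4].
Definition edge_e (i : nat) : {set vtx} :=
  [set v i; v i.+1; v i.+2; v i.+3; v i.+4].

Definition EH : {set {set vtx}} :=
  [set edge_r; edge_g; edge_a; edge_b;
       edge_e 1; edge_e 2; edge_e 3; edge_e 4; edge_e 5].

Definition E_ef (e f : {set vtx}) : {set {set vtx}} := EH :\ e :\ f.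

Definition V_ef (e f : {set vtx}) : {set vtx} := \bigcup_(x in E_ef e f) x.

(* phi (a function defined on all vertices, only its restriction to V(H_ef)
   matters) is a monomorphism V(H_ef) -> V(H). *)
Definition monomorphism (e f : {set vtx}) (phi : vtx -> vtx) : Prop :=
  {in V_ef e f &, injective phi} /\
  (forall x, x \in E_ef e f -> phi @: x \in EH).

(* A monomorphism phi maps every edge x of H_ef onto an edge of H, and since phi
   is injective on V(H_ef), phi(u) lies in phi(x) exactly when u lies in x.
   Guessing the images of the edges one at a time therefore confines each phi(u)
   to the vertices whose incidences with the guessed images match those of u.
   An exhaustive search, run by computation for every pair e, f, shows that each
   sequence of guesses either leaves some vertex without a candidate or leaves
   every vertex as its own only candidate. *)

From mathcomp Require Import all_boot.

Set Implicit Arguments.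
Unset Strict Implicit.
Unset Printing Implicit Defensive.

Section CandidateSearch.

Variables (T : eqType) (H : seq (seq T)).

(* A state pairs each source vertex with its remaining candidate images;
   [refine_cands x F] records the guess that the edge [x] is mapped onto [F]. *)
Definition refine_cands (x F : seq T) (S : seq (T * seq T)) : seq (T * seq T) :=
  [seq (p.1, [seq w <- p.2 | (w \in F) == (p.1 \in x)]) | p <- S].

(* [if] rather than [||]: [orb] is a function, so under [vm_compute] the
   recursive call would be evaluated even on branches already refuted. *)
Fixpoint forces_identity (Es : seq (seq T)) (S : seq (T * seq T)) : bool :=
  if Es is x :: Es' then
    all (fun F => let S' := refine_cands x F S in
                  if has (fun p => nilp p.2) S' then true else forces_identity Es' S') H
  else all (fun p => all (pred1 p.1) p.2) S.

Lemma forces_identityP (V : seq T) (phi : T -> T) (Es : seq (seq T))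
    (S : seq (T * seq T)) :
  (forall x, x \in Es ->
     exists2 F, F \in H & {in V, forall u, (phi u \in F) = (u \in x)}) ->
  (forall p, p \in S -> p.1 \in V /\ phi p.1 \in p.2) ->
  forces_identity Es S -> forall p, p \in S -> phi p.1 = p.1.
Proof.
elim: Es S => [|x Es IH] S phiE phiS /=.
  move=> /allP S1 p pS; apply/eqP.
  by apply: (allP (S1 p pS)); case: (phiS p pS).
have [F FH phiF] := phiE x (mem_head x Es).
have phiS' p : p \in refine_cands x F S -> p.1 \in V /\ phi p.1 \in p.2.
  case/mapP=> q qS ->; have [qV phiq] := phiS q qS.
  by rewrite mem_filter phiF // eqxx.
move=> /allP/(_ F FH); case: hasP => [[p /phiS'[_] + /nilP p0] | _ search].
  by rewrite p0.
move=> p pS; have := IH _ _ phiS' search (p.1, _) (map_f _ pS); apply.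
by move=> y yEs; apply: phiE; rewrite in_cons yEs orbT.
Qed.

Definition initial_cands (Es : seq (seq T)) : seq (T * seq T) :=
  [seq (u, undup (flatten H)) | u <- undup (flatten Es)].

End CandidateSearch.

Lemma mem_imset_in (aT rT : finType) (f : aT -> rT) (D A : {set aT}) x :
  {in D &, injective f} -> A \subset D -> x \in D -> (f x \in f @: A) = (x \in A).
Proof.
move=> f_inj sAD xD; apply/imsetP/idP => [[y yA fxy] | xA]; last by exists x.
by rewrite (f_inj x y xD (subsetP sAD y yA) fxy).
Qed.

Lemma monomorphism_forces_identity (T : finType) (H Es : seq (seq T)) (phi : T -> T) :
  {in [set u in flatten Es] &, injective phi} ->
  (forall s, s \in Es -> phi @: [set:: s] \in [seq [set:: t] | t <- H]) ->
  forces_identity H Es (initial_cands H Es) ->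
  {in flatten Es, forall u, phi u = u}.
Proof.
move=> phi_inj phiE search u uEs.
have sub_flatten s : s \in Es -> [set:: s] \subset [set u in flatten Es].
  by move=> sEs; apply/subsetP => w; rewrite !inE => ws; apply/flattenP; exists s.
apply: (forces_identityP (V := flatten Es)) search (u, undup (flatten H)) _.
- move=> s sEs; have /mapP[t tH phi_s] := phiE s sEs; exists t => // w wEs.
  by rewrite -[_ \in t]inE -phi_s (mem_imset_in phi_inj (sub_flatten s sEs)) ?inE.
- case=> w C /mapP[w' + [-> ->]]; rewrite mem_undup => wEs; split=> //.
  have /flattenP[s sEs ws] := wEs; have /mapP[t tH phi_s] := phiE s sEs.
  rewrite mem_undup; apply/flattenP; exists t => //.
  by rewrite -[_ \in t]inE -phi_s imset_f ?inE.
- by apply/mapP; exists u; rewrite ?mem_undup.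
Qed.

Definition same_elems (T : eqType) (s t : seq T) : bool :=
  all (fun w => (w \in s) == (w \in t)) (s ++ t).

Lemma eq_set_seqE (T : finType) (s t : seq T) :
  ([set:: s] == [set:: t]) = same_elems s t.
Proof.
rewrite /same_elems; apply/eqP/allP => [/setP st w _ | st].
  by have := st w; rewrite !inE => ->.
apply/setP => w; rewrite !inE.
have [/st/eqP // | ] := boolP (w \in s ++ t).
by rewrite mem_cat negb_or => /andP[/negbTE-> /negbTE->].
Qed.

(* [inord] is stuck under [vm_compute] (it matches on the opaque [idP]), hence
   this computable copy. *)
Definition vert (i : nat) : vtx := Ordinal (ltn_pmod i (isT : 0 < 10)).

Lemma inord_vert i : i < 10 -> inord i = vert i.
Proof. by move=> lti; apply: val_inj; rewrite /= inordK // modn_small. Qed.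

Definition edge_seqs : seq (seq vtx) :=
  [seq map vert s | s <- [:: [:: 0; 1; 3; 5; 8]; [:: 0; 2; 4; 7; 9];
     [:: 1; 4; 6; 8; 9]; [:: 9; 1; 2; 3; 4];
     iota 1 5; iota 2 5; iota 3 5; iota 4 5; iota 5 5]].

Lemma mem_EH (x : {set vtx}) :
  (x \in EH) = (x \in [seq [set:: s] | s <- edge_seqs]).
Proof.
have -> : [seq [set:: s] | s <- edge_seqs] =
          [:: edge_r; edge_g; edge_a; edge_b;
              edge_e 1; edge_e 2; edge_e 3; edge_e 4; edge_e 5].
  rewrite /edge_r /edge_g /edge_a /edge_b /edge_e /z /v !inord_vert //.
  by congr [:: _; _; _; _; _; _; _; _; _]; apply/setP => w; rewrite !inE ?orbA.
by rewrite /EH !inE !orbA.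
Qed.

Definition ef_seqs (se sf : seq vtx) : seq (seq vtx) :=
  [seq s <- edge_seqs | ~~ same_elems s se && ~~ same_elems s sf].

Lemma mem_E_ef (se sf : seq vtx) (x : {set vtx}) :
  (x \in E_ef [set:: se] [set:: sf]) = (x \in [seq [set:: s] | s <- ef_seqs se sf]).
Proof.
rewrite !in_setD1 mem_EH; apply/and3P/mapP => [[xf xe /mapP[s sH xs]] | [s]].
  by exists s; rewrite // mem_filter sH -!eq_set_seqE -xs xe xf.
by rewrite mem_filter -!eq_set_seqE => /andP[/andP[se' sf'] sH] ->; split; rewrite ?map_f.
Qed.

Lemma V_efE (se sf : seq vtx) :
  V_ef [set:: se] [set:: sf] = [set u in flatten (ef_seqs se sf)].
Proof.
apply/setP => u; rewrite inE; apply/bigcupP/flattenP => [[x] | [s sEs us]].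
  by rewrite mem_E_ef => /mapP[s sEs ->]; rewrite inE; exists s.
by exists [set:: s]; rewrite ?mem_E_ef ?map_f ?inE.
Qed.

Lemma ef_seqsC (se sf : seq vtx) : ef_seqs se sf = ef_seqs sf se.
Proof. by apply: eq_filter => s; rewrite andbC. Qed.

Definition rigid_pair (se sf : seq vtx) : bool :=
  same_elems se sf
  || forces_identity edge_seqs (ef_seqs se sf) (initial_cands edge_seqs (ef_seqs se sf)).

Lemma rigid_pair_refl : reflexive rigid_pair.
Proof. by move=> s; rewrite /rigid_pair -eq_set_seqE eqxx. Qed.

Lemma rigid_pair_sym : symmetric rigid_pair.
Proof. by move=> se sf; rewrite /rigid_pair -!eq_set_seqE eq_sym ef_seqsC. Qed.

Lemma pairwise_rigid_pair : pairwise rigid_pair edge_seqs.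
Proof. vm_cast_no_check (erefl true). Qed.

Theorem lemma4p12 (e f : {set vtx}) (phi : vtx -> vtx) :
  e \in EH -> f \in EH -> e != f ->
  monomorphism e f phi ->
  {in V_ef e f, forall y, phi y = y}.
Proof.
rewrite !mem_EH => /mapP[se seH ->] /mapP[sf sfH ->] sesf [phi_inj phiE].
rewrite V_efE in phi_inj *.
have phiE' s :
    s \in ef_seqs se sf -> phi @: [set:: s] \in [seq [set:: t] | t <- edge_seqs].
  by move=> sEs; rewrite -mem_EH; apply: phiE; rewrite mem_E_ef map_f.
have := pairwise_rigid_pair.
rewrite (pairwise_all2rel rigid_pair_refl rigid_pair_sym) => /allrelP/(_ se sf seH sfH).
rewrite /rigid_pair -eq_set_seqE (negbTE sesf) => /= search y; rewrite inE.
exact: monomorphism_forces_identity phi_inj phiE' search y.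
Qed.
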